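(* Let $\lambda_1\ge\lambda_2\ge\cdots\ge\lambda_p>0$ and define the norm $\Omega(\beta):=\sum_{i=1}^p\lambda_i|\beta|_{(i)}$ on $\mathbb{R}^p$, where $|\beta|_{(1)}\ge\cdots\ge|\beta|_{(p)}$ are the absolute values of the entries of $\beta$ in decreasing order. Let $S\subseteq\{1,\dots,p\}$, $s=|S|$, $r=p-s$, and define on $\mathbb{R}^{r}$ (indexed by $S^c$) $$\Omega^{S^c}(\beta_{S^c}):=\sum_{l=1}^r\lambda_{p-r+l}|\beta|_{(l,S^c)},$$ where $|\beta|_{(1,S^c)}\ge\cdots\ge|\beta|_{(r,S^c)}$ are the absolute values of the entries of $\beta_{S^c}$ in decreasing order. Then $\Omega(\beta)\ge\Omega(\beta_S)+\Omega^{S^c}(\beta_{S^c})$ for all $\beta\in\mathbb{R}^p$. Moreover, $\Omega^{S^c}$ is the strongest such norm: for every norm $\underline\Omega^{S^c}$ on $\mathbb{R}^{r}$ satisfying $\Omega(\beta)\ge\Omega(\beta_S)+\underline\Omega^{S^c}(\beta_{S^c})$ for all $\beta\in\mathbb{R}^p$, one has $\underline\Omega^{S^c}(v)\le\Omega^{S^c}(v)$ for all $v\in\mathbb{R}^r$.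
   Context: $\beta_S$ denotes the vector in $\mathbb{R}^p$ agreeing with $\beta$ on $S$ and equal to $0$ off $S$ (when $\Omega$ is applied), and $\beta_{S^c}=(\beta_j)_{j\in S^c}\in\mathbb{R}^{r}$. *)

From mathcomp Require Import all_boot all_order all_algebra.
Set Implicit Arguments. Unset Strict Implicit. Unset Printing Implicit Defensive.
Import Order.TTheory GRing.Theory Num.Theory.
Local Open Scope ring_scope.

(* absolute values of the entries of v, sorted in nonincreasing order:
   nth 0 (abs_sorted v) i = |v|_(i+1) *)
Definition abs_sorted (R : realFieldType) (n : nat) (v : 'rV[R]_n) : seq R :=
  sort (fun x y : R => y <= x) [seq `|v ord0 i| | i <- enum 'I_n].

Definition sl1 (R : realFieldType) (w : nat -> R) (n : nat) (v : 'rV[R]_n) : R :=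
  \sum_(i < n) w i * (abs_sorted v)`_i.

(* Omega(beta), with lam i the paper's lambda_{i+1} *)
Definition Omega (R : realFieldType) (lam : nat -> R) (p : nat) (b : 'rV[R]_p) : R :=
  sl1 lam b.

Definition restr (R : realFieldType) (p : nat) (S : {set 'I_p}) (b : 'rV[R]_p) : 'rV[R]_p :=
  \row_i (if i \in S then b ord0 i else 0).

(* beta_{S^c} in R^r, r = #|S^c|, entries of S^c listed in increasing order *)
Definition restrC (R : realFieldType) (p : nat) (S : {set 'I_p}) (b : 'rV[R]_p)
  : 'rV[R]_#|~: S| :=
  \row_k b ord0 (enum_val k).

Definition OmegaSc (R : realFieldType) (lam : nat -> R) (p : nat) (S : {set 'I_p})
  (v : 'rV[R]_#|~: S|) : R :=
  sl1 (fun l => lam (p - #|~: S| + l)%N) v.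

Definition is_norm (R : realFieldType) (n : nat) (N : 'rV[R]_n -> R) : Prop :=
  [/\ forall v, 0 <= N v,
      forall v, N v = 0 -> v = 0,
      forall (a : R) v, N (a *: v) = `|a| * N v
    & forall u v, N (u + v) <= N u + N v].

From mathcomp Require Import all_boot all_order all_algebra.
From mathcomp Require Import lra.
Set Implicit Arguments. Unset Strict Implicit. Unset Printing Implicit Defensive.
Import Order.TTheory GRing.Theory Num.Theory.
Local Open Scope ring_scope.

(* The sorted absolute values of [beta] are those of [beta_S] and of
   [beta_{S^c}] merged.  [Omega(beta_S) + Omega^{S^c}(beta_{S^c})] weights
   the concatenation "sorted [beta_S] entries, then sorted [beta_{S^c}]
   entries" by [lambda]; by the rearrangement inequality (nonincreasing
   weights are best paired with nonincreasing values) this is at most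
   [Omega(beta)].  Equality holds when every entry on [S] dominates every
   entry off [S]; for such [beta] with [beta_{S^c} = v] the hypothesis on a
   competing norm reads exactly [N v <= Omega^{S^c}(v)]. *)

Section Rearrangement.
Variable R : realFieldType.

Local Notation geR := (fun x y : R => y <= x).

Fixpoint wsum (w : nat -> R) (X : seq R) : R :=
  if X is x :: X' then w 0%N * x + wsum (fun i => w i.+1) X' else 0.

Definition noninc_weights (n : nat) (w : nat -> R) :=
  forall i, (i.+1 < n)%N -> w i.+1 <= w i.

Lemma eq_wsum w w' X : w =1 w' -> wsum w X = wsum w' X.
Proof.
by elim: X w w' => //= x X IH w w' ww'; rewrite ww' (IH _ (fun i => w' i.+1)).
Qed.

Lemma wsum_cat w X Y :
  wsum w (X ++ Y) = wsum w X + wsum (fun i => w (size X + i)%N) Y.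
Proof.
elim: X w => /= [|x X IH] w; first by rewrite add0r; apply: eq_wsum.
by rewrite IH addrA.
Qed.

Lemma wsum_nseq0 w n : wsum w (nseq n 0) = 0.
Proof. by elim: n w => //= n IH w; rewrite IH mulr0 addr0. Qed.

Lemma big_wsum (w : nat -> R) (X : seq R) :
  \sum_(i < size X) w i * X`_i = wsum w X.
Proof.
by elim: X w => [|x X IH] w; rewrite ?big_ord0 // big_ord_recl /= -IH.
Qed.

Lemma geR_trans : transitive geR.
Proof. by move=> y x z /= yx zy; apply: le_trans zy yx. Qed.

Lemma geR_anti : antisymmetric geR.
Proof. by move=> x y /andP[yx xy]; apply/eqP; rewrite eq_le xy. Qed.

Lemma geR_total : total geR.
Proof. by move=> x y; apply: le_total. Qed.

Fixpoint insert (x : R) (Y : seq R) : seq R :=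
  if Y is y :: Y' then (if y <= x then x :: Y else y :: insert x Y')
  else [:: x].

Lemma perm_insert x Y : perm_eq (insert x Y) (x :: Y).
Proof.
elim: Y => [|y Y IH] //=; case: ifP => _ //.
rewrite (perm_trans (_ : perm_eq _ (y :: x :: Y))) ?perm_cons //.
by rewrite (perm_catCA [:: y] [:: x]).
Qed.

Lemma path_insert z x Y : x <= z -> path geR z Y -> path geR z (insert x Y).
Proof.
elim: Y z => [|y Y IH] z xz /=; first by rewrite xz.
case/andP=> yz pY; case: ifP => yx /=; first by rewrite xz yx.
by rewrite yz IH // ltW // ltNge yx.
Qed.

Lemma sorted_insert x Y : sorted geR Y -> sorted geR (insert x Y).
Proof.
case: Y => [|y Y] //= pY; case: ifP => yx /=; first by rewrite yx.
by apply: path_insert; rewrite // ltW // ltNge yx.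
Qed.

Lemma sort_cons x X : sort geR (x :: X) = insert x (sort geR X).
Proof.
apply: (sorted_eq geR_trans geR_anti).
- exact: (sort_sorted geR_total).
- by apply: sorted_insert; apply: (sort_sorted geR_total).
- by rewrite perm_sort perm_sym (permPl (perm_insert _ _)) perm_cons perm_sort.
Qed.

(* Moving [x] to its place in a nonincreasing [Y] is a chain of swaps
   [(y, x) -> (x, y)] with [x <= y], each adding
   [(w_k - w_(k+1)) (y - x) >= 0]. *)
Lemma wsum_insert w x Y : noninc_weights (size Y).+1 w ->
  w 0%N * x + wsum (fun i => w i.+1) Y <= wsum w (insert x Y).
Proof.
elim: Y w => [|y Y IH] w w_noninc //=.
case: ifP => yx //=.
have := IH (fun i => w i.+1) (fun i lti => w_noninc i.+1 lti).
have w10 : w 1%N <= w 0%N by apply: w_noninc.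
have swap : 0 <= (w 0%N - w 1%N) * (y - x).
  by apply: mulr_ge0; rewrite subr_ge0 // ltW // ltNge yx.
move: swap; set F := wsum _ Y; set G := wsum _ (insert x Y); nra.
Qed.

Lemma wsum_le_sort w X : noninc_weights (size X) w ->
  wsum w X <= wsum w (sort geR X).
Proof.
elim: X w => [|x X IH] w w_noninc //=.
rewrite sort_cons; apply: (le_trans _ (wsum_insert _ _)).
  by rewrite lerD2l IH // => i lti; apply: w_noninc.
by rewrite size_sort.
Qed.

Lemma sort_cat_dominated A C : (forall a c, a \in A -> c \in C -> c <= a) ->
  sort geR (A ++ C) = sort geR A ++ sort geR C.
Proof.
move=> AC; apply: (sorted_eq geR_trans geR_anti).
- exact: (sort_sorted geR_total).
- rewrite sorted_pairwise ?pairwise_cat; last exact: geR_trans.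
  rewrite -!sorted_pairwise; try exact: geR_trans.
  rewrite !(sort_sorted geR_total) !andbT.
  by apply/allrelP => a c; rewrite !mem_sort; apply: AC.
- by rewrite perm_sort perm_sym perm_cat // perm_sort.
Qed.

Lemma sort_cat_sort A C :
  sort geR (sort geR A ++ sort geR C) = sort geR (A ++ C).
Proof.
apply/(perm_sortP geR_total geR_trans geR_anti).
by rewrite perm_cat ?perm_sort.
Qed.

End Rearrangement.

Lemma map_enum_val (T : finType) (A : {pred T}) :
  [seq enum_val i | i <- enum 'I_#|A|] = enum A.
Proof.
rewrite -[RHS]/(tval (enum_tuple A)) -map_tnth_enum; apply/eq_map => i.
by rewrite (tnth_nth (enum_val i)) -enum_val_nth.
Qed.

Section Restrictions.
Variables (R : realFieldType) (p : nat) (S : {set 'I_p}).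

Local Notation geR := (fun x y : R => y <= x).

Definition abs_entries (b : 'rV[R]_p) (A : {set 'I_p}) : seq R :=
  [seq `|b ord0 i| | i <- enum A].

Lemma sl1E w n (v : 'rV[R]_n) : sl1 w v = wsum w (abs_sorted v).
Proof. by rewrite /sl1 -big_wsum size_sort size_map size_enum_ord. Qed.

Lemma perm_enum_setC : perm_eq (enum 'I_p) (enum S ++ enum (~: S)).
Proof.
apply: uniq_perm; first exact: enum_uniq.
  rewrite cat_uniq !enum_uniq /= andbT; apply/hasPn => i.
  by rewrite !mem_enum inE => /negbTE ->.
by move=> i; rewrite mem_cat !mem_enum !inE orbN.
Qed.

Lemma abs_sorted_split b :
  abs_sorted b = sort geR (abs_entries b S ++ abs_entries b (~: S)).
Proof.
apply/(perm_sortP (@geR_total R) (@geR_trans R) (@geR_anti R)).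
by rewrite -map_cat perm_map // perm_enum_setC.
Qed.

Lemma abs_sorted_restr b :
  abs_sorted (restr S b) = sort geR (abs_entries b S) ++ nseq #|~: S| 0.
Proof.
have onS : abs_entries (restr S b) S = abs_entries b S.
  by apply/eq_in_map => i; rewrite mem_enum mxE => ->.
have offS : abs_entries (restr S b) (~: S) = nseq #|~: S| 0.
  rewrite cardE -(size_map (fun i => `|restr S b ord0 i|)).
  apply/all_pred1P/allP => x /mapP[i]; rewrite mem_enum inE => /negbTE iS ->.
  by rewrite /= mxE iS normr0.
have sort_zeros : sort geR (nseq #|~: S| 0) = nseq #|~: S| 0.
  rewrite -{2}(size_nseq #|~: S| (0 : R)) -(size_sort geR).
  apply/all_pred1P.
  by rewrite (perm_all _ (permEl (perm_sort _ _))) all_pred1_nseq.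
rewrite abs_sorted_split onS offS sort_cat_dominated ?sort_zeros //.
by move=> a c /mapP[i _ ->]; rewrite mem_nseq => /andP[_ /eqP ->].
Qed.

Lemma abs_entries_setC b :
  abs_entries b (~: S) = [seq `|restrC S b ord0 k| | k <- enum 'I_#|~: S|].
Proof.
rewrite /abs_entries -map_enum_val -map_comp.
by apply/eq_map => k; rewrite /= mxE.
Qed.

Lemma abs_sorted_restrC b :
  abs_sorted (restrC S b) = sort geR (abs_entries b (~: S)).
Proof. by rewrite abs_entries_setC. Qed.

Lemma Omega_restr_add_OmegaSc (lam : nat -> R) b :
  Omega lam (restr S b) + OmegaSc lam (restrC S b) =
  wsum lam (sort geR (abs_entries b S) ++ sort geR (abs_entries b (~: S))).
Proof.
rewrite /Omega /OmegaSc !sl1E abs_sorted_restr abs_sorted_restrC.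
rewrite !wsum_cat wsum_nseq0 addr0 size_sort size_map -cardE.
congr (_ + _); apply: eq_wsum => l.
by rewrite -[p in (p - _)%N](card_ord p) -(cardsC S) addnK.
Qed.

Definition extend (c : R) (v : 'rV[R]_#|~: S|) : 'rV[R]_p :=
  \row_i oapp (fun k => v ord0 k) c [pick k | enum_val k == i].

Lemma restrC_extend c v : restrC S (extend c v) = v.
Proof.
apply/rowP => k; rewrite !mxE; case: pickP => [k' /eqP/enum_val_inj -> //|].
by move/(_ k); rewrite eqxx.
Qed.

Lemma extend_on_S c v i : i \in S -> extend c v ord0 i = c.
Proof.
move=> iS; rewrite mxE; case: pickP => [k /eqP eq_ki|//].
by have := enum_valP k; rewrite eq_ki inE iS.
Qed.

Lemma Omega_restr_add_OmegaSc_le (lam : nat -> R) b :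
  noninc_weights p lam ->
  Omega lam (restr S b) + OmegaSc lam (restrC S b) <= Omega lam b.
Proof.
move=> lam_noninc.
rewrite Omega_restr_add_OmegaSc /Omega sl1E abs_sorted_split.
rewrite -sort_cat_sort; apply: wsum_le_sort.
by rewrite size_cat !size_sort !size_map -!cardE cardsC card_ord.
Qed.

Lemma Omega_extend (lam : nat -> R) (c : R) (v : 'rV[R]_#|~: S|) :
  0 <= c -> (forall k, `|v ord0 k| <= c) ->
  Omega lam (extend c v) = Omega lam (restr S (extend c v)) + OmegaSc lam v.
Proof.
move=> c_ge0 v_le_c.
rewrite -[v in OmegaSc _ v](restrC_extend c v) Omega_restr_add_OmegaSc.
rewrite /Omega sl1E abs_sorted_split sort_cat_dominated // => a d.
case/mapP=> i; rewrite mem_enum => iS ->; rewrite extend_on_S // ger0_norm //.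
by rewrite abs_entries_setC restrC_extend => /mapP[k _ ->].
Qed.

End Restrictions.

Theorem lemma6 (R : realFieldType) (p : nat) (lam : nat -> R)
  (lam_noninc : forall i : nat, (i.+1 < p)%N -> lam i.+1 <= lam i)
  (lam_pos : forall i : nat, (i < p)%N -> 0 < lam i)
  (S : {set 'I_p}) :
  (forall b : 'rV[R]_p,
      Omega lam (restr S b) + OmegaSc lam (restrC S b) <= Omega lam b)
  /\
  (forall N : 'rV[R]_#|~: S| -> R, is_norm N ->
     (forall b : 'rV[R]_p, Omega lam (restr S b) + N (restrC S b) <= Omega lam b) ->
     forall v : 'rV[R]_#|~: S|, N v <= OmegaSc lam v).
Proof.
split=> [b | N _ N_le v]; first exact: Omega_restr_add_OmegaSc_le.
pose c := \sum_k `|v ord0 k|.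
have c_ge0 : 0 <= c by apply: sumr_ge0.
have v_le_c k : `|v ord0 k| <= c.
  by rewrite /c (bigD1 k) //= lerDl sumr_ge0.
have := N_le (extend c v).
by rewrite restrC_extend (Omega_extend _ c_ge0 v_le_c) lerD2l.
Qed.
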